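(* Assume $\Sigma$, $\Sigma^\pi$, $\widehat\Sigma$ are invertible and $\|(\Sigma^\pi)^{1/2}M^\pi(\Sigma^\pi)^{-1/2}\|_2\le1$. Let $\Delta X:=N\widehat\Sigma^{-1}-\Sigma^{-1}$, $\Delta M^\pi:=\widehat M^\pi-M^\pi$, $\Delta Y^\pi:=\frac1N\sum_{n=1}^N\phi(s_n,a_n)\phi^\pi(s_n')^\top-\Sigma M^\pi$, and $\Delta W_h^\pi:=\frac1N\sum_{n=1}^N\phi(s_n,a_n)\big(Q_h^\pi(s_n,a_n)-r_n'-V_{h+1}^\pi(s_n')\big)$. Then: (1) $|E_2|\le\sum_{h=0}^H\sqrt{(\nu_0^\pi)^\top(\Sigma^\pi)^{-1}\nu_0^\pi}\,\|(\Sigma^\pi)^{1/2}\Sigma^{-1/2}\|_2\,\|\Sigma^{-1/2}\Delta W_h^\pi\|_2\Big((1+\|(\Sigma^\pi)^{1/2}\Delta M^\pi(\Sigma^\pi)^{-1/2}\|_2)^h(1+\|\Sigma^{1/2}\Delta X\Sigma^{1/2}\|_2)-1\Big)$; (2) $\|(\Sigma^\pi)^{1/2}\Delta M^\pi(\Sigma^\pi)^{-1/2}\|_2\le\sqrt{\kappa_1}\Big((1+\|\Sigma^{1/2}\Delta X\Sigma^{1/2}\|_2)(1+\|\Sigma^{-1/2}\Delta Y^\pi\Sigma^{-1/2}\|_2)-1\Big)$; (3) if $\|N^{-1}\Sigma^{-1/2}\widehat\Sigma\Sigma^{-1/2}-I\|_2\le\frac12$, then $\|\Sigma^{1/2}\Delta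 X\Sigma^{1/2}\|_2\le2\|N^{-1}\Sigma^{-1/2}\widehat\Sigma\Sigma^{-1/2}-I\|_2$. Here $E_2:=\sum_{h=0}^H\big(N(\widehat\nu_h^\pi)^\top\widehat\Sigma^{-1}-(\nu_h^\pi)^\top\Sigma^{-1}\big)\Delta W_h^\pi$.
   Context: MDP setting with $\mathcal X=\mathcal S\times\mathcal A$, target policy $\pi$, horizon $H$, initial distribution $\xi_0$, value functions $Q_h^\pi(s,a)=\mathbb E^\pi[\sum_{h'=h}^Hr(s_{h'},a_{h'})\mid s_h=s,a_h=a]$, $V_h^\pi(s)=\int Q_h^\pi(s,a)\pi(a\mid s)da$, $V_{H+1}^\pi=0$. $\phi:\mathcal X\to\mathbb R^d$, $\phi^\pi(s)=\int\phi(s,a)\pi(a\mid s)da$, $M^\pi\in\mathbb R^{d\times d}$ any matrix (in the paper, the one with $\phi(s,a)^\top M^\pi=\mathbb E[\phi^\pi(s')^\top\mid s,a]$). Data $\{(s_n,a_n,s_n',r_n')\}_{n=1}^N$, $\lambda\ge0$, $\widehat\Sigma=\lambda I+\sum_n\phi(s_n,a_n)\phi(s_n,a_n)^\top$, $\widehat M^\pi=\widehat\Sigma^{-1}\sum_n\phi(s_n,a_n)\phi^\pi(s_n')^\top$, $\nu_0^\pi=\mathbb E[\phi(s,a)\mid s\sim\xi_0,a\sim\pi(\cdot\mid s)]$, $\nu_h^\pi=((M^\pi)^\top)^h\nu_0^\pi$, $\widehat\nu_h^\pi=((\widehat M^\pi)^\top)^h\nu_0^\pi$. $\Sigma,\Sigma^\pi$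 are symmetric positive definite $d\times d$ matrices (in the paper the data covariance and the covariance of $\phi^\pi$ under an invariant distribution of the target policy), and $\kappa_1:=\mathrm{cond}(\Sigma^{-1/2}\Sigma^\pi\Sigma^{-1/2})$. *)

From HB Require Import structures.
From mathcomp Require Import all_boot all_order all_algebra.
From Stdlib Require Import ClassicalEpsilon.
Set Implicit Arguments. Unset Strict Implicit. Unset Printing Implicit Defensive.
Import Order.TTheory GRing.Theory Num.Theory.
Local Open Scope ring_scope.

Section Defs.
Variable R : rcfType.

Definition vnorm n (v : 'cV[R]_n) : R := Num.sqrt (\sum_i v i 0 ^+ 2).

Definition is_opnorm m n (A : 'M[R]_(m, n)) (c : R) : Prop :=
  0 <= c /\ (forall v, vnorm (A *m v) <= c * vnorm v) /\
  (forall c', 0 <= c' -> (forall v, vnorm (A *m v) <= c' * vnorm v) -> c <= c').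

Definition opnorm m n (A : 'M[R]_(m, n)) : R :=
  epsilon (inhabits 0) (is_opnorm A).

Definition posdef n (A : 'M[R]_n) : Prop :=
  A^T = A /\ forall v : 'cV[R]_n, v != 0 -> 0 < (v^T *m A *m v) 0 0.
Definition psd n (A : 'M[R]_n) : Prop :=
  A^T = A /\ forall v : 'cV[R]_n, 0 <= (v^T *m A *m v) 0 0.

Definition msqrt n (A : 'M[R]_n) : 'M[R]_n :=
  epsilon (inhabits 0) (fun P => psd P /\ P *m P = A).
Definition msqrtinv n (A : 'M[R]_n) : 'M[R]_n := invmx (msqrt A).

Definition cond n (A : 'M[R]_n) : R := opnorm A * opnorm (invmx A).

Definition mxpow n (A : 'M[R]_n) (k : nat) : 'M[R]_n := iter k (mulmx A) 1%:M.

Variables (d N : nat) (S A : Type) (phi : S -> A -> 'cV[R]_d)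
  (phipi : S -> 'cV[R]_d) (s : 'I_N -> S) (a : 'I_N -> A) (s' : 'I_N -> S)
  (r : 'I_N -> R).

Definition Sigma_hat (lam : R) : 'M[R]_d :=
  lam%:M + \sum_(n < N) phi (s n) (a n) *m (phi (s n) (a n))^T.

Definition cross_sum : 'M[R]_d := \sum_(n < N) phi (s n) (a n) *m (phipi (s' n))^T.

Definition M_hat (lam : R) : 'M[R]_d := invmx (Sigma_hat lam) *m cross_sum.

Definition nu_h (M : 'M[R]_d) (nu0 : 'cV[R]_d) (h : nat) : 'cV[R]_d :=
  mxpow M^T h *m nu0.

Definition DeltaX (lam : R) (Sigma : 'M[R]_d) : 'M[R]_d :=
  N%:R *: invmx (Sigma_hat lam) - invmx Sigma.

Definition DeltaM (lam : R) (M : 'M[R]_d) : 'M[R]_d := M_hat lam - M.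

Definition DeltaY (Sigma M : 'M[R]_d) : 'M[R]_d :=
  N%:R^-1 *: cross_sum - Sigma *m M.

Definition DeltaW (Q : nat -> S -> A -> R) (V : nat -> S -> R) (h : nat)
  : 'cV[R]_d :=
  N%:R^-1 *: \sum_(n < N) (Q h (s n) (a n) - r n - V h.+1 (s' n)) *: phi (s n) (a n).

Definition E2 (lam : R) (Sigma M : 'M[R]_d) (nu0 : 'cV[R]_d)
  (Q : nat -> S -> A -> R) (V : nat -> S -> R) (H : nat) : R :=
  \sum_(h < H.+1)
    (((N%:R *: ((nu_h (M_hat lam) nu0 h)^T *m invmx (Sigma_hat lam))
       - (nu_h M nu0 h)^T *m invmx Sigma) *m DeltaW Q V h) 0 0).

End Defs.

(* Whitening by the square roots of Sigma and Sigmapi turns the three bounds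
   into spectral-norm perturbation estimates for products of matrices.  Write
   X, Y, Dm for the whitened DeltaX, DeltaY, DeltaM and B for the whitened M^pi,
   so that ||B|| <= 1.
   (3) 1 + X inverts 1 + E with E = N^-1 Sigma^-1/2 Shat Sigma^-1/2 - I, so
       X = -(E + E X) and ||X|| <= ||E|| (1 + ||X||).
   (2) Mhat = (Sigma^-1 + DeltaX) (Sigma M^pi + DeltaY) splits Dm into three
       terms, each flanked by Sigmapi^1/2 Sigma^-1/2 and Sigma^1/2 Sigmapi^-1/2,
       whose norms multiply to at most sqrt kappa1.
   (1) The h-th summand of E2 is the inner product of Sigmapi^-1/2 nu0 with
       ((B + Dm)^h C (1 + X) - B^h C) Sigma^-1/2 DeltaW_h, C = Sigmapi^1/2 Sigma^-1/2,
       and ||(B + Dm)^h - B^h|| <= (1 + ||Dm||)^h - 1 by telescoping.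
   Square roots and the spectral norm exist by the real spectral theorem, which
   follows from the complex one by Householder deflation. *)

From HB Require Import structures.
From mathcomp Require Import all_boot all_order all_algebra.
From mathcomp Require Import ring lra.
From mathcomp Require Import spectral complex.
From Stdlib Require Import ClassicalEpsilon.
Import Order.TTheory GRing.Theory Num.Theory.
Set Implicit Arguments. Unset Strict Implicit. Unset Printing Implicit Defensive.
Local Open Scope ring_scope.

Section RealSpectral.
Variable R : rcfType.

Definition vdot n (u v : 'cV[R]_n) : R := (u^T *m v) 0 0.

Lemma vdotE n (u v : 'cV[R]_n) : vdot u v = \sum_i u i 0 * v i 0.
Proof. by rewrite /vdot mxE; apply: eq_bigr => i _; rewrite mxE. Qed.

Lemma vdotC n (u v : 'cV[R]_n) : vdot u v = vdot v u.
Proof. by rewrite !vdotE; apply: eq_bigr => i _; rewrite mulrC. Qed.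

Lemma vdotDl n (u v w : 'cV[R]_n) : vdot (u + v) w = vdot u w + vdot v w.
Proof. by rewrite !vdotE -big_split; apply: eq_bigr => i _; rewrite mxE mulrDl. Qed.

Lemma vdotZl n a (u w : 'cV[R]_n) : vdot (a *: u) w = a * vdot u w.
Proof. by rewrite !vdotE mulr_sumr; apply: eq_bigr => i _; rewrite mxE mulrA. Qed.

Lemma vdotBl n (u v w : 'cV[R]_n) : vdot (u - v) w = vdot u w - vdot v w.
Proof. by rewrite -scaleN1r vdotDl vdotZl mulN1r. Qed.

Lemma vdotDr n (u v w : 'cV[R]_n) : vdot w (u + v) = vdot w u + vdot w v.
Proof. by rewrite ![vdot w _]vdotC vdotDl. Qed.

Lemma vdotBr n (u v w : 'cV[R]_n) : vdot w (u - v) = vdot w u - vdot w v.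
Proof. by rewrite ![vdot w _]vdotC vdotBl. Qed.

Lemma vdotZr n a (u w : 'cV[R]_n) : vdot w (a *: u) = a * vdot w u.
Proof. by rewrite ![vdot w _]vdotC vdotZl. Qed.

Lemma vdot_ge0 n (u : 'cV[R]_n) : 0 <= vdot u u.
Proof. by rewrite vdotE; apply: sumr_ge0 => i _; rewrite -expr2 sqr_ge0. Qed.

Lemma vdot_eq0 n (u : 'cV[R]_n) : (vdot u u == 0) = (u == 0).
Proof.
apply/idP/eqP => [|->]; last by rewrite /vdot mulmx0 mxE.
rewrite vdotE psumr_eq0 => [/allP u0|i _]; last by rewrite -expr2 sqr_ge0.
apply/matrixP => i j; rewrite ord1 mxE.
by have := u0 i (mem_index_enum _); rewrite -expr2 sqrf_eq0 => /eqP.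
Qed.

Lemma vdot_gt0 n (u : 'cV[R]_n) : (0 < vdot u u) = (u != 0).
Proof. by rewrite lt_def vdot_ge0 vdot_eq0 andbT. Qed.

Lemma vdot_mulmxl m n (A : 'M[R]_(m, n)) u v : vdot (A *m u) v = vdot u (A^T *m v).
Proof. by rewrite /vdot trmx_mul mulmxA. Qed.

Lemma vdot_orthomx n (O : 'M[R]_n) v : O^T *m O = 1%:M -> vdot (O *m v) (O *m v) = vdot v v.
Proof. by move=> OO; rewrite vdot_mulmxl mulmxA OO mul1mx. Qed.

Lemma vdot_delta n (i : 'I_n) : vdot (delta_mx i 0) (delta_mx i 0) = 1.
Proof. by rewrite /vdot trmx_delta mul_delta_mx mxE. Qed.

Lemma vdot_diag_mx n (D : 'rV[R]_n) w :
  vdot w (diag_mx D *m w) = \sum_i D 0 i * w i 0 ^+ 2.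
Proof. by rewrite vdotE; apply: eq_bigr => i _; rewrite mul_diag_mx mxE; ring. Qed.

Lemma vnormE n (v : 'cV[R]_n) : vnorm v = Num.sqrt (vdot v v).
Proof. by rewrite /vnorm vdotE; congr Num.sqrt; apply: eq_bigr => i _; rewrite expr2. Qed.

Lemma vnorm_ge0 n (v : 'cV[R]_n) : 0 <= vnorm v.
Proof. by rewrite vnormE sqrtr_ge0. Qed.

Lemma vnorm_sqr n (v : 'cV[R]_n) : vnorm v ^+ 2 = vdot v v.
Proof. by rewrite vnormE sqr_sqrtr // vdot_ge0. Qed.

(* The complexification is hermitian, hence has a real eigenvalue. *)
Lemma symmx_eigenvector n (S : 'M[R]_n.+1) : S^T = S ->
  exists (lam : R) (v : 'cV[R]_n.+1), v != 0 /\ S *m v = lam *: v.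
Proof.
move=> Ssym; pose SC := map_mx (real_complex R) S.
have SCh : SC \is hermsymmx.
  apply: realsym_hermsym.
    apply/is_hermitianmxP; rewrite expr0 scale1r.
    by apply/matrixP=> i j; rewrite !mxE -[in LHS]Ssym mxE.
  by apply/mxOverP => i j; rewrite mxE; apply/complex_realP; eexists.
have /hermitian_normalmx /orthomx_spectralP SCE := SCh.
have dreal := hermitian_spectral_diag_real SCh.
set P := spectralmx SC in SCE; set D := spectral_diag SC in SCE dreal.
have Pu : P \in unitmx by apply: spectral_unit.
pose mu := D 0 0; have mu_real : mu \is Num.real by apply: (mxOverP dreal).
exists (complex.Re mu).
have /det0P [v vn0 vS] : \det (S - (complex.Re mu)%:M) == 0.
  apply/eqP/(@complexI R); rewrite rmorph0.
  rewrite -(@det_map_mx _ _ (real_complex R)) map_mxB /= map_scalar_mx.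
  rewrite (_ : (_ (complex.Re mu))%:M = mu%:M); last by congr (_%:M); apply: RRe_real.
  change (\det (SC - mu%:M) = 0); rewrite SCE.
  have -> : mu%:M = invmx P *m mu%:M *m P.
    by rewrite mul_mx_scalar -scalemxAl mulVmx // scalemx1.
  rewrite -mulmxBl -mulmxBr !det_mulmx -diag_const_mx -linearB /= det_diag.
  by rewrite (bigD1 0) //= !mxE subrr mul0r mulr0 mul0r.
exists v^T; split; first by rewrite trmx_eq0.
have vS' : (v *m (S - (complex.Re mu)%:M))^T = 0 by rewrite vS trmx0.
rewrite trmx_mul linearB /= tr_scalar_mx Ssym mulmxBl mul_scalar_mx in vS'.
by apply/eqP; rewrite -subr_eq0 vS'.
Qed.

Lemma householder_reflection n (u e : 'cV[R]_n) : vdot u u = 1 -> vdot e e = 1 ->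
  exists H : 'M[R]_n, [/\ H^T = H, H *m H = 1%:M & H *m e = u].
Proof.
move=> uu ee; pose w := e - u; pose q := vdot w w; pose c := 2 / q.
have w_dot x : w *m (w^T *m x) = vdot w x *: w.
  by rewrite [w^T *m x]mx11_scalar mul_mx_scalar.
exists (1%:M - c *: (w *m w^T)); split.
- by rewrite linearB /= tr_scalar_mx linearZ /= trmx_mul trmxK.
- rewrite mulmxBl mul1mx mulmxBr mulmx1 -scalemxAl -scalemxAr scalerA.
  rewrite -mulmxA (mulmxA w^T) [w^T *m w]mx11_scalar mul_scalar_mx -scalemxAr.
  rewrite -/(vdot w w) -/q scalerA.
  have -> : c * c * q = c *+ 2.
    rewrite /c; have [->|q0] := eqVneq q 0; first by rewrite !invr0 !mulr0 mul0rn.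
    by rewrite mulr2n; field.
  by rewrite -scalerMnl mulr2n opprB addrK subrK.
have [q0|q0] := eqVneq q 0.
  have /eqP eu : e == u by rewrite -subr_eq0 -vdot_eq0 -/w -/q q0.
  by rewrite /c q0 invr0 mulr0 scale0r subr0 mul1mx eu.
have qE : q = 2 * vdot w e.
  by rewrite /q /w !vdotBl !vdotBr ee uu [vdot e u]vdotC; ring.
have we : vdot w e != 0 by move: q0; rewrite qE mulf_eq0 negb_or => /andP[].
rewrite mulmxBl mul1mx -scalemxAl -mulmxA w_dot scalerA.
have -> : c * vdot w e = 1 by rewrite /c qE; field.
by rewrite scale1r /w opprB addrC subrK.
Qed.

Definition orthomx_diag n (S : 'M[R]_n) :=
  exists (O : 'M[R]_n) (D : 'rV[R]_n),
    [/\ O *m O^T = 1%:M, O^T *m O = 1%:M & S = O^T *m diag_mx D *m O].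

Lemma block_orthomx_diag n (T : 'M[R]_(1 + n)) (lam : R) :
  (forall S : 'M[R]_n, S^T = S -> orthomx_diag S) ->
  T^T = T -> T *m col_mx 1%:M 0 = lam *: col_mx 1%:M 0 -> orthomx_diag T.
Proof.
move=> IH; rewrite -(submxK T) tr_block_mx => /eq_block_mx [_ cb _ dsym].
rewrite mul_block_col !mulmx1 !mulmx0 !addr0 scale_col_mx scaler0.
move=> /eq_col_mx [aE c0]; have b0 : ursubmx T = 0 by rewrite -cb c0 trmx0.
have [O [D [O1 O2 dE]]] := IH _ dsym.
pose Ob : 'M[R]_(1 + n) := block_mx 1%:M 0 0 O.
have ObT : Ob^T = block_mx 1%:M 0 0 O^T by rewrite tr_block_mx !trmx0 trmx1.
have diag1 : diag_mx (lam%:M : 'rV[R]_1) = lam%:M.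
  by apply/matrixP => i j; rewrite !ord1 !mxE eqxx.
exists Ob, (row_mx lam%:M D); rewrite ObT /Ob diag_mx_row diag1.
split; rewrite !mulmx_block !(mulmx0, mul0mx, mulmx1, mul1mx, addr0, add0r).
- by rewrite O1 -scalar_mx_block.
- by rewrite O2 -scalar_mx_block.
- by rewrite aE b0 c0 dE scalemx1.
Qed.

Lemma symmx_orthomx_diag n (S : 'M[R]_n) : S^T = S -> orthomx_diag S.
Proof.
elim: n S => [|n IH] S Ssym.
  by exists 0, 0; split; rewrite [LHS]flatmx0 [RHS]flatmx0.
have [lam [v [vn0 Sv]]] := symmx_eigenvector Ssym.
pose u := (vnorm v)^-1 *: v.
have vpos : 0 < vnorm v by rewrite vnormE sqrtr_gt0 vdot_gt0.
have uu : vdot u u = 1.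
  by rewrite vdotZl vdotZr -vnorm_sqr mulrA -expr2 -exprMn mulVf ?expr1n ?gt_eqF.
pose e : 'cV[R]_(1 + n) := col_mx 1%:M 0.
have ee : vdot e e = 1.
  by rewrite /vdot tr_col_mx trmx1 trmx0 mul_row_col mulmx1 mulmx0 addr0 mxE.
have [H [Hs HH He]] := householder_reflection uu ee.
have Hu : H *m u = e by rewrite -He mulmxA HH mul1mx.
pose T := H *m S *m H.
have Ts : T^T = T by rewrite /T !trmx_mul Hs Ssym mulmxA.
have Su : S *m u = lam *: u by rewrite -scalemxAr Sv !scalerA mulrC.
have Te : T *m e = lam *: e by rewrite /T -!mulmxA He Su -scalemxAr Hu.
have [O [D [O1 O2 TE]]] := block_orthomx_diag IH Ts Te.
exists (O *m H), D; rewrite !trmx_mul Hs; split.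
- by rewrite mulmxA -(mulmxA O) HH mulmx1 O1.
- by rewrite mulmxA -(mulmxA H) O2 mulmx1 HH.
have -> : S = H *m T *m H by rewrite /T !mulmxA HH mul1mx -mulmxA HH mulmx1.
by rewrite TE !mulmxA.
Qed.

Section Diagonalized.
Variables (n : nat) (S O : 'M[R]_n) (D : 'rV[R]_n).
Hypotheses (OOt : O *m O^T = 1%:M) (SE : S = O^T *m diag_mx D *m O).

Lemma vdot_orthomx_diag v : vdot v (S *m v) = vdot (O *m v) (diag_mx D *m (O *m v)).
Proof. by rewrite SE -!mulmxA -vdot_mulmxl. Qed.

Lemma vdot_orthomx_diag_eigvec i :
  vdot (O^T *m delta_mx i 0) (S *m (O^T *m delta_mx i 0)) = D 0 i.
Proof.
rewrite vdot_orthomx_diag mulmxA OOt mul1mx vdot_diag_mx (bigD1 i) //= mxE eqxx.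
rewrite big1 ?addr0 ?expr1n ?mulr1 // => j ji.
by rewrite mxE (negbTE ji) expr0n mulr0.
Qed.

Lemma orthomx_diag_ge0 : (forall v, 0 <= vdot v (S *m v)) -> forall i, 0 <= D 0 i.
Proof. by move=> S0 i; rewrite -vdot_orthomx_diag_eigvec. Qed.

End Diagonalized.

Lemma msqrt_exists n (S : 'M[R]_n) : psd S -> exists P, psd P /\ P *m P = S.
Proof.
move=> [Ssym Spsd]; have [O [D [O1 O2 SE]]] := symmx_orthomx_diag Ssym.
have D0 : forall i, 0 <= D 0 i.
  by apply: (orthomx_diag_ge0 O1 SE) => v; rewrite /vdot mulmxA.
pose P := O^T *m diag_mx (map_mx Num.sqrt D) *m O.
exists P; split; [split|].
- by rewrite !trmx_mul trmxK tr_diag_mx mulmxA.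
- move=> v; rewrite -mulmxA -/(vdot _ _) (vdot_orthomx_diag (erefl P)) vdot_diag_mx.
  by apply: sumr_ge0 => i _; rewrite mxE mulr_ge0 ?sqrtr_ge0 ?sqr_ge0.
rewrite SE /P -!mulmxA (mulmxA O) O1 mul1mx !mulmxA; congr (_ *m _).
rewrite -!mulmxA; congr (_ *m _); apply/matrixP => i j; rewrite mul_diag_mx !mxE.
by case: eqVneq => [->|]; rewrite ?mulr1n ?mulr0n ?mulr0 // -expr2 sqr_sqrtr.
Qed.

Lemma msqrtP n (S : 'M[R]_n) : psd S -> psd (msqrt S) /\ msqrt S *m msqrt S = S.
Proof. by move/msqrt_exists; apply: epsilon_spec. Qed.

(* [||A||_2] is the square root of the largest eigenvalue of [A^T A]. *)
Lemma opnorm_exists m n (A : 'M[R]_(m, n)) : exists c, is_opnorm A c.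
Proof.
case: n A => [|n] A.
  exists 0; split=> //; split=> // v.
  by rewrite [v]flatmx0 mulmx0 mul0r /vnorm big1 ?sqrtr0 // => i _; rewrite mxE expr0n.
have Gsym : (A^T *m A)^T = A^T *m A by rewrite trmx_mul trmxK.
have [O [D [O1 O2 GE]]] := symmx_orthomx_diag Gsym.
have GA v : vdot v (A^T *m A *m v) = vdot (A *m v) (A *m v).
  by rewrite vdot_mulmxl mulmxA.
have D0 : forall i, 0 <= D 0 i.
  by apply: (orthomx_diag_ge0 O1 GE) => v; rewrite GA vdot_ge0.
have [i _ Dmax] := @arg_maxP _ R _ ord0 predT (fun i => D 0 i) isT.
exists (Num.sqrt (D 0 i)); split; first exact: sqrtr_ge0.
split=> [v|c c0 Ac].
  rewrite !vnormE -sqrtrM ?D0 // ler_wsqrtr // -GA (vdot_orthomx_diag GE).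
  rewrite vdot_diag_mx -(vdot_orthomx v O2) vdotE mulr_sumr.
  by apply: ler_sum => j _; rewrite -expr2 ler_wpM2r ?sqr_ge0 //; apply: Dmax.
have := Ac (O^T *m delta_mx i 0).
rewrite !vnormE vdot_orthomx ?trmxK // vdot_delta sqrtr1 mulr1.
by rewrite -GA (vdot_orthomx_diag_eigvec O1 GE).
Qed.

Lemma opnormP m n (A : 'M[R]_(m, n)) : is_opnorm A (opnorm A).
Proof. exact: epsilon_spec (opnorm_exists A). Qed.

End RealSpectral.

Section OperatorNorm.
Variable R : rcfType.
Implicit Types (m n p : nat).

Lemma vdot_sqr_le n (u v : 'cV[R]_n) : vdot u v ^+ 2 <= vdot u u * vdot v v.
Proof.
have [->|vn0] := eqVneq v 0; first by rewrite /vdot !mulmx0 !mxE expr0n mulr0.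
have vv0 : 0 < vdot v v by rewrite vdot_gt0.
have := vdot_ge0 (vdot v v *: u - vdot u v *: v).
rewrite !vdotBl !vdotBr !vdotZl !vdotZr (vdotC v u) => uv0.
have : 0 <= vdot v v * (vdot u u * vdot v v - vdot u v ^+ 2).
  by move: uv0; congr (_ <= _); ring.
by rewrite pmulr_rge0 // subr_ge0.
Qed.

Lemma normr_vdot_le n (u v : 'cV[R]_n) : `|vdot u v| <= vnorm u * vnorm v.
Proof.
by rewrite !vnormE -sqrtrM ?vdot_ge0 // -sqrtr_sqr ler_wsqrtr // vdot_sqr_le.
Qed.

Lemma vnormD n (u v : 'cV[R]_n) : vnorm (u + v) <= vnorm u + vnorm v.
Proof.
rewrite -(ler_pXn2r (isT : (0 < 2)%N)) ?nnegrE ?addr_ge0 ?vnorm_ge0 //.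
rewrite vnorm_sqr vdotDl !vdotDr sqrrD !vnorm_sqr (vdotC v u).
have := le_trans (ler_norm _) (normr_vdot_le u v); lra.
Qed.

Lemma vnormZ n a (v : 'cV[R]_n) : vnorm (a *: v) = `|a| * vnorm v.
Proof. by rewrite !vnormE vdotZl vdotZr mulrA -expr2 sqrtrM ?sqr_ge0 // sqrtr_sqr. Qed.

Lemma vnormN n (v : 'cV[R]_n) : vnorm (- v) = vnorm v.
Proof. by rewrite -scaleN1r vnormZ normrN1 mul1r. Qed.

Lemma opnorm_ge0 m n (A : 'M[R]_(m, n)) : 0 <= opnorm A.
Proof. by case: (opnormP A). Qed.

Lemma vnorm_mulmx_le m n (A : 'M[R]_(m, n)) v : vnorm (A *m v) <= opnorm A * vnorm v.
Proof. by case: (opnormP A) => _ []. Qed.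

Lemma opnorm_le m n (A : 'M[R]_(m, n)) c : 0 <= c ->
  (forall v, vnorm (A *m v) <= c * vnorm v) -> opnorm A <= c.
Proof. by case: (opnormP A) => _ [_]; apply. Qed.

Lemma opnormD m n (A B : 'M[R]_(m, n)) : opnorm (A + B) <= opnorm A + opnorm B.
Proof.
apply: opnorm_le => [|v]; first by rewrite addr_ge0 ?opnorm_ge0.
rewrite mulmxDl mulrDl; apply: le_trans (vnormD _ _) _.
by rewrite lerD ?vnorm_mulmx_le.
Qed.

Lemma opnormM m n p (A : 'M[R]_(m, n)) (B : 'M[R]_(n, p)) :
  opnorm (A *m B) <= opnorm A * opnorm B.
Proof.
apply: opnorm_le => [|v]; first by rewrite mulr_ge0 ?opnorm_ge0.
rewrite -mulmxA -mulrA; apply: le_trans (vnorm_mulmx_le _ _) _.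
by rewrite ler_wpM2l ?opnorm_ge0 ?vnorm_mulmx_le.
Qed.

Lemma opnorm1 n : opnorm (1%:M : 'M[R]_n) <= 1.
Proof. by apply: opnorm_le => // v; rewrite mul1mx mul1r. Qed.

Lemma opnorm_tr m n (A : 'M[R]_(m, n)) : opnorm A^T <= opnorm A.
Proof.
apply: opnorm_le => [|v]; first exact: opnorm_ge0.
have [->|nz] := eqVneq (vnorm (A^T *m v)) 0.
  by rewrite mulr_ge0 ?opnorm_ge0 ?vnorm_ge0.
have : vnorm (A^T *m v) * vnorm (A^T *m v) <= vnorm v * (opnorm A * vnorm (A^T *m v)).
  rewrite -expr2 vnorm_sqr vdot_mulmxl trmxK.
  apply: le_trans (le_trans (ler_norm _) (normr_vdot_le _ _)) _.
  by rewrite ler_wpM2l ?vnorm_ge0 // vnorm_mulmx_le.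
move=> sq_le; rewrite -(ler_pM2r (_ : 0 < vnorm (A^T *m v))) ?lt_def ?nz ?vnorm_ge0 //.
by apply: le_trans sq_le _; rewrite mulrA [vnorm v * _]mulrC.
Qed.

Lemma opnorm_le_sqrt_gram m n (A : 'M[R]_(m, n)) :
  opnorm A <= Num.sqrt (opnorm (A^T *m A)).
Proof.
apply: opnorm_le => [|v]; first exact: sqrtr_ge0.
rewrite -(ler_pXn2r (isT : (0 < 2)%N)) ?nnegrE ?mulr_ge0 ?sqrtr_ge0 ?vnorm_ge0 //.
rewrite vnorm_sqr vdot_mulmxl exprMn sqr_sqrtr ?opnorm_ge0 // expr2 mulrCA.
apply: le_trans (le_trans (ler_norm _) (normr_vdot_le _ _)) _.
by rewrite ler_wpM2l ?vnorm_ge0 // mulmxA vnorm_mulmx_le.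
Qed.

Lemma opnormM3 m n p q (A : 'M[R]_(m, n)) (B : 'M[R]_(n, p)) (C : 'M[R]_(p, q)) :
  opnorm (A *m B *m C) <= opnorm A * opnorm B * opnorm C.
Proof. by apply: le_trans (opnormM _ _) _; rewrite ler_wpM2r ?opnorm_ge0 ?opnormM. Qed.

End OperatorNorm.

Section Perturbation.
Variables (R : rcfType) (n : nat).
Implicit Types (A B D E X Y C K P Q : 'M[R]_n) (k : R).

Lemma mxpowS A h : mxpow A h.+1 = A *m mxpow A h.
Proof. by []. Qed.

Lemma mxpowSr A h : mxpow A h.+1 = mxpow A h *m A.
Proof.
elim: h => [|h IH]; first by rewrite /mxpow /= mulmx1 mul1mx.
by rewrite mxpowS {1}IH mulmxA -mxpowS.
Qed.

Lemma tr_mxpow A h : (mxpow A h)^T = mxpow A^T h.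
Proof.
elim: h => [|h IH]; first by rewrite /mxpow /= trmx1.
by rewrite mxpowS trmx_mul IH mxpowSr.
Qed.

Lemma mxpow_conj P Q K h : P *m Q = 1%:M -> Q *m P = 1%:M ->
  mxpow (P *m K *m Q) h = P *m mxpow K h *m Q.
Proof.
move=> PQ QP; elim: h => [|h IH]; first by rewrite /mxpow /= mulmx1.
by rewrite mxpowS IH !mulmxA -(mulmxA _ Q P) QP mulmx1.
Qed.

Lemma opnorm_mxpow_le1 B h : opnorm B <= 1 -> opnorm (mxpow B h) <= 1.
Proof.
move=> B1; elim: h => [|h IH]; first exact: opnorm1.
by rewrite mxpowS (le_trans (opnormM _ _)) // -(mulr1 1) ler_pM ?opnorm_ge0.
Qed.

Lemma opnorm_mxpowD_sub B D h : opnorm B <= 1 ->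
  opnorm (mxpow (B + D) h - mxpow B h) <= (1 + opnorm D) ^+ h - 1.
Proof.
move=> B1; elim: h => [|h IH].
  by rewrite subrr expr0 subrr; apply: opnorm_le => // v; rewrite mul0mx mul0r
    -(scale0r (0 : 'cV_n)) vnormZ normr0 mul0r.
have -> : mxpow (B + D) h.+1 - mxpow B h.+1
    = (B + D) *m (mxpow (B + D) h - mxpow B h) + D *m mxpow B h.
  by rewrite !mxpowS mulmxBr !mulmxDl opprD addrA subrK.
have BD : opnorm (B + D) <= 1 + opnorm D by rewrite (le_trans (opnormD _ _)) ?lerD2r.
have head := le_trans (opnormM _ _) (ler_pM (opnorm_ge0 _) (opnorm_ge0 _) BD IH).
have tail : opnorm (D *m mxpow B h) <= opnorm D.
  exact: le_trans (opnormM _ _) (ler_piMr (opnorm_ge0 _) (opnorm_mxpow_le1 h B1)).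
by apply: le_trans (opnormD _ _) _; apply: le_trans (lerD head tail) _; rewrite exprS; lra.
Qed.

Lemma opnorm_inverse_perturbation E X : (1%:M + E) *m (1%:M + X) = 1%:M ->
  opnorm E <= 2^-1 -> opnorm X <= 2 * opnorm E.
Proof.
move=> inv e_le.
have XE : X = - (E + E *m X).
  apply/eqP; rewrite -addr_eq0; apply/eqP/(@addrI _ 1%:M).
  by rewrite addr0 addrA -[in RHS]inv mulmxDl !mul1mx mulmxDr mulmx1.
apply: opnorm_le => [|v]; first by rewrite mulr_ge0 ?opnorm_ge0.
have : vnorm (X *m v) <= opnorm E * vnorm v + opnorm E * vnorm (X *m v).
  rewrite {1}XE mulNmx vnormN mulmxDl -mulmxA.
  by apply: le_trans (vnormD _ _) _; rewrite lerD ?vnorm_mulmx_le.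
have := opnorm_ge0 E; have := vnorm_ge0 (X *m v); have := vnorm_ge0 v; nra.
Qed.

Lemma opnorm_product_perturbation C (C' : 'M[R]_n) X Y B k :
  opnorm B <= 1 -> opnorm C * opnorm C' <= k ->
  opnorm (C *m Y *m C' + C *m X *m C' *m B + C *m X *m Y *m C')
    <= k * ((1 + opnorm X) * (1 + opnorm Y) - 1).
Proof.
move=> B1 CC'k.
have c0 := opnorm_ge0 C; have x0 := opnorm_ge0 X; have y0 := opnorm_ge0 Y.
have termB : opnorm (C *m X *m C' *m B) <= opnorm C * opnorm X * opnorm C'.
  exact: le_trans (opnormM _ _) (le_trans (ler_piMr (opnorm_ge0 _) B1) (opnormM3 _ _ _)).
have termXY : opnorm (C *m X *m Y *m C') <= opnorm C * opnorm X * opnorm Y * opnorm C'.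
  by rewrite (le_trans (opnormM _ _)) // ler_wpM2r ?opnorm_ge0 ?opnormM3.
apply: le_trans (opnormD _ _) _; apply: le_trans (lerD (opnormD _ _) (lexx _)) _.
apply: le_trans (lerD (lerD (opnormM3 _ _ _) termB) termXY) _.
apply: le_trans (_ : _ <= opnorm C * opnorm C' * ((1 + opnorm X) * (1 + opnorm Y) - 1)) _.
  by rewrite le_eqVlt; apply/orP; left; apply/eqP; ring.
by rewrite ler_wpM2r // subr_ge0 mulr_ege1 ?lerDl.
Qed.

Lemma vdot_power_perturbation (u w : 'cV[R]_n) B D C X h : opnorm B <= 1 ->
  `|vdot u ((mxpow (B + D) h *m C *m (1%:M + X) - mxpow B h *m C) *m w)|
    <= vnorm u * opnorm C * vnorm w * ((1 + opnorm D) ^+ h * (1 + opnorm X) - 1).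
Proof.
move=> B1; set Z := _ - _.
have ZE : Z = (mxpow (B + D) h - mxpow B h) *m C *m (1%:M + X) + mxpow B h *m C *m X.
  by rewrite /Z !mulmxBl [mxpow B h *m C *m (1%:M + X)]mulmxDr mulmx1 opprD addrA subrK.
have c0 := opnorm_ge0 C; have x0 := opnorm_ge0 X; have d0 := opnorm_ge0 D.
have Z_le : opnorm Z <= opnorm C * ((1 + opnorm D) ^+ h * (1 + opnorm X) - 1).
  have IX : opnorm (1%:M + X) <= 1 + opnorm X.
    by rewrite (le_trans (opnormD _ _)) ?lerD2r ?opnorm1.
  have first_term := le_trans (opnormM3 _ _ _) (ler_pM (mulr_ge0 (opnorm_ge0 _) c0)
    (opnorm_ge0 _) (ler_wpM2r c0 (opnorm_mxpowD_sub D h B1)) IX).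
  have second_term : opnorm (mxpow B h *m C *m X) <= opnorm C * opnorm X.
    apply: le_trans (opnormM3 _ _ _) _; rewrite ler_wpM2r //.
    exact: ler_piMl c0 (opnorm_mxpow_le1 h B1).
  rewrite ZE; apply: le_trans (opnormD _ _) _; apply: le_trans (lerD first_term second_term) _.
  by rewrite le_eqVlt; apply/orP; left; apply/eqP; ring.
apply: le_trans (normr_vdot_le _ _) _; rewrite -mulrA -mulrA ler_wpM2l ?vnorm_ge0 //.
apply: le_trans (vnorm_mulmx_le _ _) _.
by rewrite [X in _ <= X]mulrCA [X in _ <= X]mulrC ler_wpM2r ?vnorm_ge0.
Qed.

End Perturbation.

Section SquareRoots.
Variables (R : rcfType) (n : nat).
Implicit Types (A B S : 'M[R]_n).

Lemma mulmx1_invmx A B : A *m B = 1%:M -> invmx A = B.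
Proof.
move=> AB; have [Au _] := mulmx1_unit AB.
by rewrite -[invmx A]mulmx1 -AB mulKmx.
Qed.

Lemma posdef_psd S : posdef S -> psd S.
Proof.
case=> Ssym Spos; split=> // v; have [->|vn0] := eqVneq v 0.
  by rewrite mulmx0 mxE.
exact: ltW (Spos v vn0).
Qed.

Lemma posdef_unitmx S : posdef S -> S \in unitmx.
Proof.
case=> _ Spos; rewrite unitmxE unitfE; apply/negP => /det0P [w wn0 wS].
by have := Spos w^T; rewrite trmx_eq0 trmxK wS mul0mx mxE ltxx => /(_ wn0).
Qed.

Lemma tr_msqrt S : psd S -> (msqrt S)^T = msqrt S.
Proof. by case/msqrtP => -[]. Qed.

Lemma mulmx_msqrt S : psd S -> msqrt S *m msqrt S = S.
Proof. by case/msqrtP. Qed.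

Section Posdef.
Variable S : 'M[R]_n.
Hypothesis S_pd : posdef S.
Let S_psd : psd S := posdef_psd S_pd.

Lemma msqrt_unitmx : msqrt S \in unitmx.
Proof.
have := posdef_unitmx S_pd.
by rewrite -{1}(mulmx_msqrt S_psd) unitmx_mul => /andP[].
Qed.

Lemma tr_msqrtinv : (msqrtinv S)^T = msqrtinv S.
Proof. by rewrite /msqrtinv trmx_inv tr_msqrt. Qed.

Lemma mulmx_msqrtinv_msqrt : msqrtinv S *m msqrt S = 1%:M.
Proof. exact: mulVmx msqrt_unitmx. Qed.

Lemma mulmx_msqrt_msqrtinv : msqrt S *m msqrtinv S = 1%:M.
Proof. exact: mulmxV msqrt_unitmx. Qed.

Lemma mulmx_msqrtinv : msqrtinv S *m msqrtinv S = invmx S.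
Proof.
apply/esym/mulmx1_invmx; rewrite -{1}(mulmx_msqrt S_psd).
rewrite -mulmxA (mulmxA (msqrt S) (msqrtinv S)) mulmx_msqrt_msqrtinv mul1mx.
exact: mulmx_msqrt_msqrtinv.
Qed.

End Posdef.

(* The factors are the square roots of the norms of W = Sigma^-1/2 Sigmapi Sigma^-1/2
   and of W^-1, as (Sigmapi^1/2 Sigma^-1/2)^T (Sigmapi^1/2 Sigma^-1/2) = W. *)
Lemma opnorm_whitening_le_sqrt_cond (Sigma Sigmapi : 'M[R]_n) :
  posdef Sigma -> posdef Sigmapi ->
  opnorm (msqrt Sigmapi *m msqrtinv Sigma) * opnorm (msqrt Sigma *m msqrtinv Sigmapi)
    <= Num.sqrt (cond (msqrtinv Sigma *m Sigmapi *m msqrtinv Sigma)).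
Proof.
move=> S_pd P_pd; have [S_psd P_psd] := (posdef_psd S_pd, posdef_psd P_pd).
set Sh := msqrt Sigma; set Si := msqrtinv Sigma; set Ph := msqrt Sigmapi.
set Pi := msqrtinv Sigmapi; set W := Si *m Sigmapi *m Si.
have WV : invmx W = Sh *m invmx Sigmapi *m Sh.
  apply: mulmx1_invmx; rewrite /W !mulmxA -(mulmxA _ Si Sh).
  rewrite mulmx_msqrtinv_msqrt // mulmx1 mulmxK ?posdef_unitmx //.
  exact: mulmx_msqrtinv_msqrt.
rewrite /cond sqrtrM ?opnorm_ge0 //; apply: ler_pM; rewrite ?opnorm_ge0 //.
  apply: le_trans (opnorm_le_sqrt_gram _) _.
  by rewrite trmx_mul tr_msqrtinv // tr_msqrt // mulmxA -(mulmxA Si) mulmx_msqrt.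
rewrite -[Sh *m Pi]trmxK; apply: le_trans (opnorm_tr _) _.
apply: le_trans (opnorm_le_sqrt_gram _) _; rewrite trmxK !trmx_mul.
by rewrite tr_msqrtinv // tr_msqrt // mulmxA -(mulmxA Sh) mulmx_msqrtinv // WV.
Qed.

End SquareRoots.

Lemma tr_nu_h (R : rcfType) d (M : 'M[R]_d) nu0 h : (nu_h M nu0 h)^T = nu0^T *m mxpow M h.
Proof. by rewrite /nu_h trmx_mul tr_mxpow trmxK. Qed.

Section Estimates.
Variables (R : rcfType) (d N : nat) (S A : Type) (phi : S -> A -> 'cV[R]_d)
  (phipi : S -> 'cV[R]_d) (s : 'I_N -> S) (a : 'I_N -> A) (s' : 'I_N -> S)
  (lam : R) (Mpi Sigma Sigmapi : 'M[R]_d).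
Hypotheses (Sigma_pd : posdef Sigma) (Sigmapi_pd : posdef Sigmapi).

Local Notation Shat := (Sigma_hat phi s a lam).
Local Notation Mhat := (M_hat phi phipi s a s' lam).
Local Notation DX := (DeltaX phi s a lam Sigma).
Local Notation DY := (DeltaY phi phipi s a s' Sigma Mpi).
Local Notation DM := (DeltaM phi phipi s a s' lam Mpi).
Local Notation Sh := (msqrt Sigma).
Local Notation Si := (msqrtinv Sigma).
Local Notation Ph := (msqrt Sigmapi).
Local Notation Pi := (msqrtinv Sigmapi).
Local Notation X := (Sh *m DX *m Sh).
Local Notation Y := (Si *m DY *m Si).
Local Notation B := (Ph *m Mpi *m Pi).
Local Notation Dm := (Ph *m DM *m Pi).

Let Sigma_psd := posdef_psd Sigma_pd.
Let Sh_unit := msqrt_unitmx Sigma_pd.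
Let Ph_unit := msqrt_unitmx Sigmapi_pd.
Let conjPi h K :=
  mxpow_conj K h (mulmx_msqrtinv_msqrt Sigmapi_pd) (mulmx_msqrt_msqrtinv Sigmapi_pd).

Lemma DeltaX_whitened : DX = Si *m X *m Si.
Proof. by rewrite !mulmxA mulmx_msqrtinv_msqrt // mul1mx mulmxK. Qed.

Lemma scaled_invmx_Sigma_hat : N%:R *: invmx Shat = Si *m (1%:M + X) *m Si.
Proof.
rewrite mulmxDr mulmxDl mulmx1 mulmx_msqrtinv // -DeltaX_whitened.
by rewrite /DeltaX addrC subrK.
Qed.

Lemma whitened_DeltaX_bound : (0 < N)%N -> Shat \in unitmx ->
  let e := opnorm (N%:R^-1 *: (Si *m Shat *m Si) - 1%:M) in
  e <= 2^-1 -> opnorm X <= 2 * e.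
Proof.
move=> N_gt0 Shat_unit e; apply: opnorm_inverse_perturbation.
have N0 : N%:R != 0 :> R by rewrite pnatr_eq0 -lt0n.
have -> : 1%:M + X = N%:R *: (Sh *m invmx Shat *m Sh).
  rewrite scalemxAl scalemxAr scaled_invmx_Sigma_hat !mulmxA.
  by rewrite mulmx_msqrt_msqrtinv // mul1mx mulmxKV.
rewrite addrC subrK -scalemxAl -scalemxAr scalerA mulVf // scale1r.
by rewrite !mulmxA mulmxKV // mulmxK ?mulmx_msqrtinv_msqrt.
Qed.

Lemma M_hat_factor : (0 < N)%N ->
  Mhat = (invmx Sigma + DX) *m (Sigma *m Mpi + DY).
Proof.
move=> N_gt0; have N0 : N%:R != 0 :> R by rewrite pnatr_eq0 -lt0n.
rewrite /DeltaX addrC subrK /DeltaY addrC subrK -scalemxAl -scalemxAr scalerA.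
by rewrite mulfV // scale1r.
Qed.

Lemma DeltaM_expand : (0 < N)%N ->
  DM = invmx Sigma *m DY + DX *m (Sigma *m Mpi) + DX *m DY.
Proof.
move=> N_gt0; rewrite /DeltaM M_hat_factor //; move: DX DY => dX dY.
rewrite mulmxDl !mulmxDr mulKmx ?posdef_unitmx //.
by rewrite addrAC [Mpi + _]addrC addrK addrA.
Qed.

Lemma whitened_DeltaM : (0 < N)%N ->
  let C := Ph *m Si in let C' := Sh *m Pi in
  Dm = C *m Y *m C' + C *m X *m C' *m B + C *m X *m Y *m C'.
Proof.
move=> N_gt0 C C'; rewrite DeltaM_expand // -mulmx_msqrtinv //.
rewrite -[in Sigma *m Mpi](mulmx_msqrt Sigma_psd) /C /C'; move: DX DY => dX dY.
by rewrite !mulmxDr !mulmxDl !mulmxA !(mulmxKV Sh_unit, mulmxK Sh_unit, mulmxKV Ph_unit).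
Qed.

Lemma whitened_DeltaM_bound : (0 < N)%N -> opnorm B <= 1 ->
  opnorm Dm <= Num.sqrt (cond (Si *m Sigmapi *m Si))
               * ((1 + opnorm X) * (1 + opnorm Y) - 1).
Proof.
move=> N_gt0 B1; rewrite whitened_DeltaM //.
exact: opnorm_product_perturbation _ _ B1 (opnorm_whitening_le_sqrt_cond _ _).
Qed.

Lemma Mpi_whitened : Mpi = Pi *m B *m Ph.
Proof. by rewrite !mulmxA mulmx_msqrtinv_msqrt // mul1mx mulmxKV. Qed.

Lemma M_hat_whitened : Mhat = Pi *m (B + Dm) *m Ph.
Proof.
by rewrite mulmxDr mulmxDl !mulmxA mulmx_msqrtinv_msqrt // !mul1mx !mulmxKV //
  /DeltaM addrC subrK.
Qed.

Lemma E2_term_whitened (nu0 w : 'cV[R]_d) h :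
  ((N%:R *: ((nu_h Mhat nu0 h)^T *m invmx Shat) - (nu_h Mpi nu0 h)^T *m invmx Sigma)
     *m w) 0 0
  = vdot (Pi *m nu0) ((mxpow (B + Dm) h *m (Ph *m Si) *m (1%:M + X)
                        - mxpow B h *m (Ph *m Si)) *m (Si *m w)).
Proof.
rewrite !tr_nu_h /vdot (trmx_mul Pi) tr_msqrtinv //.
rewrite scalemxAr scaled_invmx_Sigma_hat M_hat_whitened conjPi.
rewrite [in mxpow Mpi h]Mpi_whitened conjPi.
rewrite -mulmx_msqrtinv //; congr (_ 0 0).
by rewrite !mulmxBl !mulmxBr !mulmxA.
Qed.

Lemma E2_bound (r : 'I_N -> R) (Q : nat -> S -> A -> R) (V : nat -> S -> R)
    (nu0 : 'cV[R]_d) H : opnorm B <= 1 ->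
  `|E2 phi phipi s a s' r lam Sigma Mpi nu0 Q V H|
    <= \sum_(h < H.+1) Num.sqrt ((nu0^T *m invmx Sigmapi *m nu0) 0 0)
         * opnorm (Ph *m Si) * vnorm (Si *m DeltaW phi s a s' r Q V h)
         * ((1 + opnorm Dm) ^+ h * (1 + opnorm X) - 1).
Proof.
move=> B1.
have nu0_norm : vnorm (Pi *m nu0) = Num.sqrt ((nu0^T *m invmx Sigmapi *m nu0) 0 0).
  rewrite vnormE /vdot trmx_mul tr_msqrtinv // mulmxA -[nu0^T *m Pi *m Pi]mulmxA.
  by rewrite mulmx_msqrtinv.
apply: le_trans (ler_norm_sum _ _ _) _; apply: ler_sum => h _.
by rewrite E2_term_whitened -nu0_norm vdot_power_perturbation.
Qed.

End Estimates.

Theorem lemma7 (R : rcfType) (d N H : nat) (S A : Type)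
  (phi : S -> A -> 'cV[R]_d) (phipi : S -> 'cV[R]_d)
  (Q : nat -> S -> A -> R) (V : nat -> S -> R)
  (s : 'I_N -> S) (a : 'I_N -> A) (s' : 'I_N -> S) (r : 'I_N -> R)
  (lam : R) (Mpi Sigma Sigmapi : 'M[R]_d) (nu0 : 'cV[R]_d) :
  (0 < N)%N ->
  0 <= lam ->
  (forall x, V H.+1 x = 0) ->
  posdef Sigma -> posdef Sigmapi ->
  Sigma_hat phi s a lam \in unitmx ->
  opnorm (msqrt Sigmapi *m Mpi *m msqrtinv Sigmapi) <= 1 ->
  let DX := DeltaX phi s a lam Sigma in
  let DM := DeltaM phi phipi s a s' lam Mpi in
  let DY := DeltaY phi phipi s a s' Sigma Mpi in
  let kappa1 := cond (msqrtinv Sigma *m Sigmapi *m msqrtinv Sigma) in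
  let x := opnorm (msqrt Sigma *m DX *m msqrt Sigma) in
  let m := opnorm (msqrt Sigmapi *m DM *m msqrtinv Sigmapi) in
  let y := opnorm (msqrtinv Sigma *m DY *m msqrtinv Sigma) in
  let e := opnorm (N%:R^-1 *: (msqrtinv Sigma *m Sigma_hat phi s a lam
                                 *m msqrtinv Sigma) - 1%:M) in
  (* (1) *)
  `| E2 phi phipi s a s' r lam Sigma Mpi nu0 Q V H |
    <= \sum_(h < H.+1)
         Num.sqrt ((nu0^T *m invmx Sigmapi *m nu0) 0 0)
         * opnorm (msqrt Sigmapi *m msqrtinv Sigma)
         * vnorm (msqrtinv Sigma *m DeltaW phi s a s' r Q V h)
         * ((1 + m) ^+ h * (1 + x) - 1)
  (* (2) *)
  /\ m <= Num.sqrt kappa1 * ((1 + x) * (1 + y) - 1)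
  (* (3) *)
  /\ (e <= 2^-1 -> x <= 2 * e).
Proof.
move=> N_gt0 _ _ Sigma_pd Sigmapi_pd Shat_unit B1 DX DM DY kappa1 x m y e.
split; [|split].
- exact: E2_bound.
- exact: whitened_DeltaM_bound.
- exact: whitened_DeltaX_bound.
Qed.
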